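(* Let $K$ be a perfect field, $k\subset K$ a subfield, and $V$ a two-sided vector space of rank $n$ over $K$. Then the non-commutative symmetric algebra $\mathcal{S}^{n.c.}_K(V)$ exists, i.e. $V^{i*}$ has rank $n$ for all $i\in\mathbb{Z}$.
   Context: A two-sided vector space is a $K\otimes_kK$-module; left (resp. right) multiplication by $K$ is the action of $K\otimes1$ (resp. $1\otimes K$); ${}_KV$, $V_K$ denote the restrictions of scalars; $V$ has rank $n$ if $\dim_K({}_KV)=\dim_K(V_K)=n$. The right dual $V^*$ is $\operatorname{Hom}_K(V_K,K)$ with $(a\cdot\psi\cdot b)(x)=a\psi(bx)$; the left dual ${}^*V$ is $\operatorname{Hom}_K({}_KV,K)$ with $(a\cdot\phi\cdot b)(x)=b\phi(xa)$. Iterated duals: $V^{0*}=V$, $V^{i*}=(V^{(i-1)*})^*$ for $i>0$, $V^{i*}={}^*(V^{(i+1)*})$ for $i<0$. By definition, the non-commutative symmetric algebra of a rank $n$ two-sided vector space $V$ exists if $V^{i*}$ has rank $n$ for every $i\in\mathbb{Z}$. *)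

From HB Require Import structures.
From mathcomp Require Import all_boot all_order all_algebra.
From Stdlib Require Import FunctionalExtensionality ProofIrrelevance.
Set Implicit Arguments. Unset Strict Implicit. Unset Printing Implicit Defensive.
Import GRing.Theory.
Local Open Scope ring_scope.

Definition perfect_field (K : fieldType) : Prop :=
  [pchar K] =i pred0 \/
  exists p : nat, p \in [pchar K] /\ forall x : K, exists y : K, y ^+ p = x.

(* A two-sided vector space over K relative to k, i.e. a (K (x)_k K)-module:
   an abelian group with commuting left and right K-actions that agree on k. *)
Record tsv (K : fieldType) (k : {pred K}) := TSV {
  car :> Type;
  vzero : car;
  vadd : car -> car -> car;
  vopp : car -> car;
  lact : K -> car -> car;
  ract : car -> K -> car;
  vaddA : forall x y z, vadd x (vadd y z) = vadd (vadd x y) z;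
  vaddC : forall x y, vadd x y = vadd y x;
  vadd0 : forall x, vadd vzero x = x;
  vaddN : forall x, vadd (vopp x) x = vzero;
  lact1 : forall x, lact 1 x = x;
  lactM : forall a b x, lact (a * b) x = lact a (lact b x);
  lactDr : forall a x y, lact a (vadd x y) = vadd (lact a x) (lact a y);
  lactDl : forall a b x, lact (a + b) x = vadd (lact a x) (lact b x);
  ract1 : forall x, ract x 1 = x;
  ractM : forall a b x, ract x (a * b) = ract (ract x a) b;
  ractDl : forall a x y, ract (vadd x y) a = vadd (ract x a) (ract y a);
  ractDr : forall a b x, ract x (a + b) = vadd (ract x a) (ract x b);
  lract : forall a b x, lact a (ract x b) = ract (lact a x) b;
  central : forall c x, c \in k -> lact c x = ract x c
}.

Arguments tsv : clear implicits.
Arguments vzero {K k} t.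
Arguments vadd {K k} [t].
Arguments vopp {K k} [t].
Arguments lact {K k} [t].
Arguments ract {K k} [t].

Section Duals.
Variables (K : fieldType) (k : {pred K}) (V : tsv K k).

Lemma sig_fun_eq (P : (V -> K) -> Prop) (f g : {h : V -> K | P h}) :
  (forall x, sval f x = sval g x) -> f = g.
Proof.
case: f g => [f pf] [g pg] /= H.
have E : f = g by apply: functional_extensionality.
subst g; f_equal; apply: proof_irrelevance.
Qed.

Definition rlin (f : V -> K) : Prop :=
  (forall x y, f (vadd x y) = f x + f y) /\ (forall x b, f (ract x b) = f x * b).

Definition rd_car := {f : V -> K | rlin f}.

Lemma rlin0 : rlin (fun _ => 0).
Proof. by split=> *; rewrite ?addr0 ?mul0r. Qed.
Lemma rlinD (f g : rd_car) : rlin (fun x => sval f x + sval g x).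
Proof.
case: f g => [f [f1 f2]] [g [g1 g2]] /=; split=> *.
  by rewrite f1 g1 addrACA.
by rewrite f2 g2 mulrDl.
Qed.
Lemma rlinN (f : rd_car) : rlin (fun x => - sval f x).
Proof.
case: f => [f [f1 f2]] /=; split=> *; first by rewrite f1 opprD.
by rewrite f2 mulNr.
Qed.
Lemma rlinL a (f : rd_car) : rlin (fun x => a * sval f x).
Proof.
case: f => [f [f1 f2]] /=; split=> *; first by rewrite f1 mulrDr.
by rewrite f2 mulrA.
Qed.
Lemma rlinR (f : rd_car) b : rlin (fun x => sval f (lact b x)).
Proof.
case: f => [f [f1 f2]] /=; split=> *; first by rewrite lactDr f1.
by rewrite lract f2.
Qed.

Definition rd_zero : rd_car := exist _ _ rlin0.
Definition rd_add (f g : rd_car) : rd_car := exist _ _ (rlinD f g).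
Definition rd_opp (f : rd_car) : rd_car := exist _ _ (rlinN f).
Definition rd_lact a (f : rd_car) : rd_car := exist _ _ (rlinL a f).
Definition rd_ract (f : rd_car) b : rd_car := exist _ _ (rlinR f b).

Definition rdual : tsv K k.
Proof.
refine (@TSV K k rd_car rd_zero rd_add rd_opp rd_lact rd_ract
  _ _ _ _ _ _ _ _ _ _ _ _ _ _); intros; apply: sig_fun_eq => w /=.
- by rewrite addrA.
- by rewrite addrC.
- by rewrite add0r.
- by rewrite addNr.
- by rewrite mul1r.
- by rewrite mulrA.
- by rewrite mulrDr.
- by rewrite mulrDl.
- by rewrite lact1.
- by rewrite lactM.
- by [].
- by case: x => f [f1 f2] /=; rewrite lactDl f1.
- by [].
- by case: x => f [f1 f2] /=; rewrite central // f2 mulrC.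
Defined.

Definition llin (f : V -> K) : Prop :=
  (forall x y, f (vadd x y) = f x + f y) /\ (forall a x, f (lact a x) = a * f x).

Definition ld_car := {f : V -> K | llin f}.

Lemma llin0 : llin (fun _ => 0).
Proof. by split=> *; rewrite ?addr0 ?mulr0. Qed.
Lemma llinD (f g : ld_car) : llin (fun x => sval f x + sval g x).
Proof.
case: f g => [f [f1 f2]] [g [g1 g2]] /=; split=> *.
  by rewrite f1 g1 addrACA.
by rewrite f2 g2 mulrDr.
Qed.
Lemma llinN (f : ld_car) : llin (fun x => - sval f x).
Proof.
case: f => [f [f1 f2]] /=; split=> *; first by rewrite f1 opprD.
by rewrite f2 mulrN.
Qed.
Lemma llinL a (f : ld_car) : llin (fun x => sval f (ract x a)).
Proof.
case: f => [f [f1 f2]] /=; split=> *; first by rewrite ractDl f1.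
by rewrite -lract f2.
Qed.
Lemma llinR (f : ld_car) b : llin (fun x => b * sval f x).
Proof.
case: f => [f [f1 f2]] /=; split=> *; first by rewrite f1 mulrDr.
by rewrite f2 mulrCA.
Qed.

Definition ld_zero : ld_car := exist _ _ llin0.
Definition ld_add (f g : ld_car) : ld_car := exist _ _ (llinD f g).
Definition ld_opp (f : ld_car) : ld_car := exist _ _ (llinN f).
Definition ld_lact a (f : ld_car) : ld_car := exist _ _ (llinL a f).
Definition ld_ract (f : ld_car) b : ld_car := exist _ _ (llinR f b).

Definition ldual : tsv K k.
Proof.
refine (@TSV K k ld_car ld_zero ld_add ld_opp ld_lact ld_ract
  _ _ _ _ _ _ _ _ _ _ _ _ _ _); intros; apply: sig_fun_eq => w /=.
- by rewrite addrA.
- by rewrite addrC.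
- by rewrite add0r.
- by rewrite addNr.
- by rewrite ract1.
- by rewrite ractM.
- by [].
- by case: x => f [f1 f2] /=; rewrite ractDr f1.
- by rewrite mul1r.
- by rewrite mulrCA mulrA.
- by rewrite mulrDr.
- by rewrite mulrDl.
- by [].
- by case: x => f [f1 f2] /=; rewrite -central // f2.
Defined.

End Duals.

(* Iterated duals: V^{0*} = V, V^{i*} = (V^{(i-1)*})^* for i > 0,
   V^{i*} = *(V^{(i+1)*}) for i < 0  (so V^{-(m+1)*} = *( ... *V) (m+1 times)). *)
Definition idual (K : fieldType) (k : {pred K}) (V : tsv K k) (i : int) : tsv K k :=
  match i with
  | Posz m => iter m (@rdual K k) V
  | Negz m => iter m.+1 (@ldual K k) V
  end.

Definition vsum (K : fieldType) (k : {pred K}) (V : tsv K k) n (F : 'I_n -> V) : V :=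
  \big[@vadd K k V / vzero V]_(i < n) F i.

Definition left_dim_eq (K : fieldType) (k : {pred K}) (V : tsv K k) (n : nat) : Prop :=
  exists e : 'I_n -> V,
    (forall c : 'I_n -> K, vsum (fun i => lact (c i) (e i)) = vzero V -> forall i, c i = 0)
    /\ (forall x : V, exists c : 'I_n -> K, x = vsum (fun i => lact (c i) (e i))).

Definition right_dim_eq (K : fieldType) (k : {pred K}) (V : tsv K k) (n : nat) : Prop :=
  exists e : 'I_n -> V,
    (forall c : 'I_n -> K, vsum (fun i => ract (e i) (c i)) = vzero V -> forall i, c i = 0)
    /\ (forall x : V, exists c : 'I_n -> K, x = vsum (fun i => ract (e i) (c i))).

Definition has_rank (K : fieldType) (k : {pred K}) (V : tsv K k) (n : nat) : Prop :=
  left_dim_eq V n /\ right_dim_eq V n.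

Definition nc_sym_exists (K : fieldType) (k : {pred K}) (V : tsv K k) (n : nat) : Prop :=
  forall i : int, has_rank (idual V i) n.

From HB Require Import structures.
From mathcomp Require Import all_boot all_order all_algebra zify.
From Stdlib Require Import Classical ClassicalEpsilon FunctionalExtensionality.
Set Implicit Arguments. Unset Strict Implicit. Unset Printing Implicit Defensive.
Import GRing.Theory.
Local Open Scope ring_scope.

(* A left basis identifies V with K^n, its right action becoming a ring
   morphism M : K -> 'M_n(K) that is additive and multiplicative but not
   K-linear.  Functionals on V are then row vectors: on each dual one of the two
   actions is the ordinary dual of an n-dimensional space, while the other is
   K^n with the transposed right action a |-> (M a)^T.  So it suffices that K^n
   has the same right dimension for M and for M^T.  Orthogonal complements turn
   M-stable subspaces into M^T-stable ones and reverse inclusions, and right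
   dimensions add up along a chain of stable subspaces, so it is enough to
   compare a simple subquotient U / U' with U'^perp / U^perp.  Fix v in U \ U'
   and z in U'^perp \ U^perp; simplicity on both sides shows that every X in the
   algebra generated by M(K) satisfies v X in U' iff z X^T in U^perp, and
   writing a basis of U / U' as v X_j modulo U' turns the z X_j^T into a basis
   of U'^perp / U^perp.  The argument does not use that K is perfect. *)

(** * Right actions of a field on row vectors *)

Section MatrixRepresentation.
Variables (K : fieldType) (m : nat).
Implicit Types (M : K -> 'M[K]_m) (U W : 'M[K]_m).

Definition mx_rmorph M :=
  [/\ forall a b, M (a + b) = M a + M b, forall a b, M (a * b) = M a *m M b
    & M 1 = 1%:M].

Definition trmx_rep M a := (M a)^T.

Definition mxstable M U := forall a, (U *m M a <= U)%MS.

Definition orthmx U : 'M[K]_m := kermx U^T.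

Lemma sub_orthmx p U (y : 'M[K]_(p, m)) : (y <= orthmx U)%MS = (y *m U^T == 0).
Proof. exact: sub_kermx. Qed.

Lemma orthmx_sym U W : (W <= orthmx U)%MS = (U <= orthmx W)%MS.
Proof.
by rewrite !sub_orthmx -[U *m _]trmxK trmx_mul trmxK trmx_eq0.
Qed.

Lemma mxrank_orthmx U : \rank (orthmx U) = (m - \rank U)%N.
Proof. by rewrite mxrank_ker mxrank_tr. Qed.

Lemma orthmxK U : (orthmx (orthmx U) :=: U)%MS.
Proof.
have sUU : (U <= orthmx (orthmx U))%MS by rewrite -orthmx_sym.
apply/eqmxP; rewrite sUU andbT.
have /mxrank_leqif_sup/geq_leqif <- := sUU.
by rewrite !mxrank_orthmx subKn // rank_leq_col.
Qed.

Lemma orthmxS U W : (U <= W)%MS -> (orthmx W <= orthmx U)%MS.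
Proof. by move=> sUW; rewrite orthmx_sym (submx_trans sUW) // -orthmx_sym. Qed.

Lemma orthmxSr U W : (orthmx W <= orthmx U)%MS -> (U <= W)%MS.
Proof. by move=> /orthmxS; rewrite !orthmxK. Qed.

Lemma orthmx1 : orthmx 1%:M = 0.
Proof.
by have := submx_refl (orthmx 1%:M); rewrite sub_orthmx trmx1 mulmx1 => /eqP.
Qed.

Lemma orthmx0 : (orthmx 0 :=: 1%:M)%MS.
Proof. by apply/eqmxP; rewrite submx1 sub_orthmx trmx0 mulmx0 eqxx. Qed.

Lemma mxstable_row M U :
  mxstable M U -> forall u : 'rV_m, (u <= U)%MS -> forall a, (u *m M a <= U)%MS.
Proof.
by move=> sU u /submxP[D ->] a; rewrite -mulmxA (submx_trans (submxMl _ _)).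
Qed.

Lemma mxstable_orthmx M U : mxstable M U -> mxstable (trmx_rep M) (orthmx U).
Proof.
move=> sU a; rewrite sub_orthmx -mulmxA -trmx_mul.
have /submxP[D ->] := sU a.
by rewrite trmx_mul mulmxA (eqP (_ : _ *m U^T == 0)) ?mul0mx // -sub_orthmx.
Qed.

Section Rmorph.
Variable M : K -> 'M[K]_m.
Hypothesis hM : mx_rmorph M.

Lemma mx_rmorphD a b : M (a + b) = M a + M b. Proof. by case: hM. Qed.
Lemma mx_rmorphM a b : M (a * b) = M a *m M b. Proof. by case: hM. Qed.
Lemma mx_rmorph1 : M 1 = 1%:M. Proof. by case: hM. Qed.
Lemma mx_rmorph0 : M 0 = 0.
Proof. by apply: (addrI (M 0)); rewrite -mx_rmorphD !addr0. Qed.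
Lemma mx_rmorphB a b : M (a - b) = M a - M b.
Proof. by apply/eqP; rewrite eq_sym subr_eq -mx_rmorphD subrK. Qed.
Lemma mx_rmorph_comm a b : M a *m M b = M b *m M a.
Proof. by rewrite -!mx_rmorphM mulrC. Qed.

Lemma mx_rmorph_tr : mx_rmorph (trmx_rep M).
Proof.
split=> [a b|a b|]; rewrite /trmx_rep.
- by rewrite mx_rmorphD linearD.
- by rewrite mulrC mx_rmorphM trmx_mul.
- by rewrite mx_rmorph1 trmx1.
Qed.

End Rmorph.

Lemma trmx_repK M : trmx_rep (trmx_rep M) = M.
Proof. by apply: functional_extensionality => a; rewrite /trmx_rep trmxK. Qed.

End MatrixRepresentation.

Section Bistable.
Variables (K : fieldType) (m : nat).
Implicit Types (M : K -> 'M[K]_m) (U W X Y : 'M[K]_m).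

(* The properties of the algebra generated by the image of [M] that the
   simple case needs, in a form closed under transposition ([bistable_tr]). *)
Definition bistable M X :=
  [/\ forall a, X *m M a = M a *m X,
      forall W, mxstable M W -> (W *m X <= W)%MS
    & forall W, mxstable (trmx_rep M) W -> (W *m X^T <= W)%MS].

Lemma bistable_tr M X : bistable M X -> bistable (trmx_rep M) X^T.
Proof.
case=> XM sX sXt; split=> [a|W|W]; rewrite ?trmx_repK ?trmxK.
- by rewrite /trmx_rep -!trmx_mul XM.
- exact: sXt.
- exact: sX.
Qed.

Lemma bistable_rep M a : mx_rmorph M -> bistable M (M a).
Proof. by move=> hM; split=> [b|W sW|W sW]; [exact: mx_rmorph_comm | exact: sW..]. Qed.

Lemma bistable0 M : bistable M 0.
Proof. by split=> [a|W _|W _]; rewrite ?trmx0 ?mulmx0 ?mul0mx ?sub0mx. Qed.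

Lemma bistableD M X Y : bistable M X -> bistable M Y -> bistable M (X + Y).
Proof.
case=> XM sX sXt [YM sY sYt]; split=> [a|W sW|W sW].
- by rewrite mulmxDl mulmxDr XM YM.
- by rewrite mulmxDr addmx_sub ?sX ?sY.
- by rewrite linearD /= mulmxDr addmx_sub ?sXt ?sYt.
Qed.

Lemma bistableZ M c X : bistable M X -> bistable M (c *: X).
Proof.
case=> XM sX sXt; split=> [a|W sW|W sW].
- by rewrite -scalemxAl -scalemxAr XM.
- by rewrite -scalemxAr scalemx_sub ?sX.
- by rewrite linearZ /= -scalemxAr scalemx_sub ?sXt.
Qed.

Lemma bistableN M X : bistable M X -> bistable M (- X).
Proof. by move=> bX; rewrite -scaleN1r; apply: bistableZ. Qed.

Lemma bistableM M X Y : bistable M X -> bistable M Y -> bistable M (X *m Y).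
Proof.
case=> XM sX sXt [YM sY sYt]; split=> [a|W sW|W sW].
- by rewrite -mulmxA YM !mulmxA XM.
- by rewrite mulmxA (submx_trans (submxMr _ (sX _ sW))) ?sY.
- by rewrite trmx_mul mulmxA (submx_trans (submxMr _ (sYt _ sW))) ?sXt.
Qed.

Lemma bistable_sum M (I : finType) (F : I -> 'M[K]_m) :
  (forall i, bistable M (F i)) -> bistable M (\sum_i F i).
Proof. by move=> bF; elim/big_ind: _ => //; [exact: bistable0 | exact: bistableD]. Qed.

Definition simple_quot M U' U := forall W, mxstable M W -> (U' <= W)%MS ->
  (W <= U)%MS -> (W <= U')%MS \/ (U <= W)%MS.

Lemma simple_quot_orthmx M U' U : mx_rmorph M -> simple_quot M U' U ->
  simple_quot (trmx_rep M) (orthmx U) (orthmx U').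
Proof.
move=> hM simU Z sZ sUZ sZU'.
have sZo : mxstable M (orthmx Z).
  by rewrite -[M]trmx_repK; apply: mxstable_orthmx.
have sU'Z : (U' <= orthmx Z)%MS by rewrite orthmx_sym.
have sZoU : (orthmx Z <= U)%MS by rewrite -(orthmxK U) orthmxS.
case: (simU _ sZo sU'Z sZoU) => [/orthmxS|] H.
  by right; rewrite orthmxK in H.
by left; rewrite orthmx_sym.
Qed.

End Bistable.

(** * Dimension of stable subquotients *)

Section FreeModulo.
Variables (K : fieldType) (T : Type) (p q : nat).
Variables (g : T -> 'rV[K]_p) (A : 'M[K]_(q, p)).

Definition gmx r (t : 'I_r -> T) : 'M[K]_(r, p) := \matrix_j g (t j).

Definition free_mod r (t : 'I_r -> T) :=
  forall c : 'rV_r, (c *m gmx t <= A)%MS -> c = 0.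

Lemma free_mod_row_free r (t : 'I_r -> T) : free_mod t -> row_free (gmx t).
Proof.
move=> ft; rewrite -kermx_eq0 -submx0; apply/row_subP => i.
have /ft -> : (row i (kermx (gmx t)) *m gmx t <= A)%MS.
  by have := row_sub i (kermx (gmx t)); rewrite sub_kermx => /eqP ->; rewrite sub0mx.
exact: sub0mx.
Qed.

Lemma free_mod_capmx r (t : 'I_r -> T) : free_mod t -> (A :&: gmx t)%MS = 0.
Proof.
move=> ft; apply/eqP; rewrite -submx0; apply/row_subP => i.
have := row_sub i (A :&: gmx t)%MS; rewrite sub_capmx => /andP[iA /submxP[c ic]].
by move: iA; rewrite ic => /ft ->; rewrite mul0mx sub0mx.
Qed.

Lemma free_mod_extend r (t : 'I_r -> T) x : free_mod t -> ~~ (g x <= A + gmx t)%MS ->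
  exists t' : 'I_r.+1 -> T,
    free_mod t' /\ (\rank (A + gmx t) < \rank (A + gmx t'))%N.
Proof.
move=> ft gx.
pose t' i := if unlift ord_max i is Some j then t j else x.
have wL j : widen_ord (leqnSn r) j = lift ord_max j.
  by apply: val_inj; rewrite /= /bump leqNgt ltn_ord.
have t'W j : t' (widen_ord (leqnSn r) j) = t j by rewrite /t' wL liftK.
have t'max : t' ord_max = x by rewrite /t' unlift_none.
pose cW := fun c : 'rV[K]_r.+1 => \row_j c 0 (widen_ord (leqnSn r) j) : 'rV[K]_r.
have decomp c : c *m gmx t' = cW c *m gmx t + c 0 ord_max *: g x.
  rewrite !mulmx_sum_row big_ord_recr /=; congr (_ + _).
    by apply: eq_bigr => j _; rewrite !rowK mxE t'W.
  by rewrite rowK t'max.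
have sx : (g x <= gmx t')%MS.
  by rewrite -t'max -(rowK (fun i => g (t' i))) row_sub.
exists t'; split=> [c Ac|].
  have c_max : c 0 ord_max = 0.
    apply/eqP; apply: contraNT gx => nz.
    have -> : g x = (c 0 ord_max)^-1 *: (c *m gmx t' - cW c *m gmx t).
      by rewrite decomp addrC addKr scalerA mulVf ?scale1r.
    rewrite scalemx_sub // addmx_sub ?eqmx_opp ?(submx_trans Ac) ?addsmxSl //.
    by rewrite (submx_trans (submxMl _ _)) ?addsmxSr.
  have /rowP cW0 : cW c = 0.
    by apply: ft; rewrite -[X in (X <= _)%MS]addr0 -(scale0r (g x)) -c_max -decomp.
  apply/rowP => i; rewrite mxE; case: (unliftP ord_max i) => [j ->| ->] //.
  by rewrite -wL; have := cW0 j; rewrite !mxE.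
have sGG : (gmx t <= gmx t')%MS.
  by apply/row_subP => j; rewrite rowK -t'W -(rowK (fun i => g (t' i))) row_sub.
apply: rank_ltmx; rewrite ltmxE addsmxS ?submx_refl //=.
apply: contra gx => sAt; apply: submx_trans sAt.
by rewrite (submx_trans sx) ?addsmxSr.
Qed.

Lemma free_mod_spanning :
  exists r (t : 'I_r -> T), free_mod t /\ forall x, (g x <= A + gmx t)%MS.
Proof.
have t0 : 'I_0 -> T by case.
suff ext N r (t : 'I_r -> T) : free_mod t -> (p - \rank (A + gmx t) <= N)%N ->
    exists r' (t' : 'I_r' -> T), free_mod t' /\ forall x, (g x <= A + gmx t')%MS.
  by apply: (ext p 0 t0) => [c _|]; [exact: thinmx0 | exact: leq_subr].
elim: N r t => [|N IH] r t ft rkN;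
  case: (classic (exists x, ~~ (g x <= A + gmx t)%MS)) => [[x gx]|all_in];
  try by exists r, t; split=> // x; apply/negPn/negP => gx; apply: all_in; exists x.
all: have [t' [ft' rk_lt]] := free_mod_extend ft gx.
all: have := rank_leq_col (A + gmx t')%MS.
  by move: rkN rk_lt; lia.
by move=> rk_le; apply: (IH _ t' ft'); move: rkN rk_lt rk_le; lia.
Qed.

End FreeModulo.

Section OrdinalConcat.
Variables (T : Type) (d1 d2 : nat) (f1 : 'I_d1 -> T) (f2 : 'I_d2 -> T).

Definition ord_cat (i : 'I_(d1 + d2)) : T :=
  match split i with inl j => f1 j | inr j => f2 j end.

Lemma ord_cat_lshift j : ord_cat (lshift d2 j) = f1 j.
Proof. by rewrite /ord_cat (unsplitK (inl _ j)). Qed.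

Lemma ord_cat_rshift j : ord_cat (rshift d1 j) = f2 j.
Proof. by rewrite /ord_cat (unsplitK (inr _ j)). Qed.

End OrdinalConcat.

Lemma ord_cat_eta T d1 d2 (f : 'I_(d1 + d2) -> T) :
  ord_cat (fun j => f (lshift d2 j)) (fun j => f (rshift d1 j)) =1 f.
Proof. by move=> i; rewrite /ord_cat -{2}(splitK i); case: (split i). Qed.

Section QuotientDimension.
Variables (K : fieldType) (m : nat) (M : K -> 'M[K]_m).
Hypothesis hM : mx_rmorph M.
Implicit Types (U W : 'M[K]_m).

Definition mxcomb d (E : 'I_d -> 'rV[K]_m) (c : 'I_d -> K) := \sum_i E i *m M (c i).

Definition quot_basis U' U d (E : 'I_d -> 'rV[K]_m) :=
  [/\ forall i, (E i <= U)%MS,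
      forall c, (mxcomb E c <= U')%MS -> forall i, c i = 0
    & forall u, (u <= U)%MS -> exists c, (u - mxcomb E c <= U')%MS].

Definition quot_dim U' U d := exists E : 'I_d -> 'rV[K]_m, quot_basis U' U E.

Lemma eqmx_quot_dim U1' U1 U2' U2 d : (U1' :=: U2')%MS -> (U1 :=: U2)%MS ->
  quot_dim U1' U1 d -> quot_dim U2' U2 d.
Proof.
move=> eU' eU [E [EU free span]]; exists E; split=> [i|c|u].
- by rewrite -eU.
- by rewrite -eU'; apply: free.
- by rewrite -eU => /span[c uc]; exists c; rewrite -eU'.
Qed.

Lemma mxcombB d (E : 'I_d -> 'rV[K]_m) c1 c2 :
  mxcomb E c1 - mxcomb E c2 = mxcomb E (fun i => c1 i - c2 i).
Proof.
by rewrite /mxcomb -sumrB; apply: eq_bigr => i _; rewrite mx_rmorphB // mulmxBr.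
Qed.

Lemma mxcomb0 d (E : 'I_d -> 'rV[K]_m) : mxcomb E (fun _ => 0) = 0.
Proof. by rewrite /mxcomb big1 // => i _; rewrite mx_rmorph0 // mulmx0. Qed.

Lemma eq_mxcomb d (E : 'I_d -> 'rV[K]_m) c1 c2 : c1 =1 c2 -> mxcomb E c1 = mxcomb E c2.
Proof. by move=> /functional_extensionality ->. Qed.

Lemma mxcomb_eq0 d (E : 'I_d -> 'rV[K]_m) c : c =1 (fun _ => 0) -> mxcomb E c = 0.
Proof. by move=> /eq_mxcomb ->; apply: mxcomb0. Qed.

Lemma mxcomb_sub U d (E : 'I_d -> 'rV[K]_m) c :
  mxstable M U -> (forall i, (E i <= U)%MS) -> (mxcomb E c <= U)%MS.
Proof. by move=> sU EU; apply: summx_sub => i _; apply: mxstable_row. Qed.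

Lemma mxcomb_cat d1 d2 (E1 : 'I_d1 -> 'rV[K]_m) (E2 : 'I_d2 -> 'rV[K]_m) c :
  mxcomb (ord_cat E1 E2) c
    = mxcomb E1 (fun j => c (lshift d2 j)) + mxcomb E2 (fun j => c (rshift d1 j)).
Proof.
rewrite /mxcomb big_split_ord /=.
by congr (_ + _); apply: eq_bigr => j _; rewrite ?ord_cat_lshift ?ord_cat_rshift.
Qed.

Lemma quot_dim_glue U' W U d1 d2 : mxstable M W -> (U' <= W)%MS -> (W <= U)%MS ->
  quot_dim U' W d1 -> quot_dim W U d2 -> quot_dim U' U (d1 + d2).
Proof.
move=> sW sU'W sWU [E1 [E1W free1 span1]] [E2 [E2U free2 span2]].
have comb1W c : (mxcomb E1 c <= W)%MS by apply: mxcomb_sub.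
exists (ord_cat E1 E2); split=> [i|c cU'|u uU].
- by rewrite /ord_cat; case: (split i) => j //; apply: submx_trans (E1W j) sWU.
- rewrite mxcomb_cat in cU'.
  have c2_0 j : c (rshift d1 j) = 0.
    move: j; apply: free2.
    rewrite -[X in (X <= _)%MS](addKr (mxcomb E1 (fun j => c (lshift d2 j)))).
    apply: addmx_sub; first by rewrite eqmx_opp.
    exact: submx_trans cU' sU'W.
  have c1_0 j : c (lshift d2 j) = 0.
    by move: j; apply: free1; move: cU'; rewrite (mxcomb_eq0 _ c2_0) addr0.
  move=> i; rewrite -(ord_cat_eta c i) /ord_cat.
  by case: (split i) => j; [apply: c1_0 | apply: c2_0].
- have [c2 u2] := span2 u uU; have [c1 u1] := span1 _ u2.
  exists (ord_cat c1 c2); rewrite mxcomb_cat.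
  rewrite (eq_mxcomb _ (ord_cat_lshift c1 c2)) (eq_mxcomb _ (ord_cat_rshift c1 c2)).
  by rewrite opprD addrA addrAC.
Qed.

Section Coordinates.
Variables (U' U : 'M[K]_m) (d : nat) (E : 'I_d -> 'rV[K]_m).
Hypotheses (sU' : mxstable M U') (sU : mxstable M U).
Hypothesis EB : quot_basis U' U E.

Definition quot_coefs u : 'I_d -> K :=
  epsilon (inhabits (fun _ => 0)) (fun c => (u - mxcomb E c <= U')%MS).

Definition quot_coord u : 'rV[K]_d := \row_i quot_coefs u i.

Lemma quot_coefsP u : (u <= U)%MS -> (u - mxcomb E (quot_coefs u) <= U')%MS.
Proof. by case: EB => _ _ /(_ u) span /span; apply: epsilon_spec. Qed.

Lemma quot_coord_eq u c : (u <= U)%MS -> (u - mxcomb E c <= U')%MS ->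
  quot_coord u = \row_i c i.
Proof.
case: EB => _ free _ uU uc.
have : forall i, quot_coefs u i - c i = 0.
  apply: free; rewrite -mxcombB.
  have -> : mxcomb E (quot_coefs u) - mxcomb E c
      = (u - mxcomb E c) - (u - mxcomb E (quot_coefs u)).
    by rewrite opprB [RHS]addrC addrA subrK.
  by rewrite addmx_sub ?eqmx_opp ?quot_coefsP.
by move=> qc; apply/rowP => i; rewrite !mxE; apply/eqP; rewrite -subr_eq0 qc.
Qed.

Lemma quot_coord_comb c : quot_coord (mxcomb E c) = \row_i c i.
Proof.
by case: EB => EU _ _; rewrite (@quot_coord_eq _ c) ?subrr ?sub0mx ?mxcomb_sub.
Qed.

Lemma quot_coord_eq0 u : (u <= U)%MS -> (quot_coord u == 0) = (u <= U')%MS.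
Proof.
move=> uU; apply/eqP/idP => [coord0 | uU'].
  have := quot_coefsP uU; rewrite (mxcomb_eq0 _ (_ : _ =1 (fun _ => 0))) ?subr0 //.
  by move=> i; move/rowP: coord0 => /(_ i); rewrite !mxE.
rewrite (@quot_coord_eq _ (fun _ => 0)) ?mxcomb0 ?subr0 //.
by apply/rowP => i; rewrite !mxE.
Qed.

Lemma quot_coordB u w : (u <= U)%MS -> (w <= U)%MS ->
  quot_coord (u - w) = quot_coord u - quot_coord w.
Proof.
move=> uU wU; have -> : quot_coord u - quot_coord w
    = \row_i (quot_coefs u i - quot_coefs w i) by apply/rowP => i; rewrite !mxE.
apply: quot_coord_eq; first by rewrite addmx_sub ?eqmx_opp.
rewrite -mxcombB (_ : u - w - _ = (u - mxcomb E (quot_coefs u))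
    - (w - mxcomb E (quot_coefs w))); last by rewrite !opprD !opprK addrACA.
by rewrite addmx_sub ?eqmx_opp ?quot_coefsP.
Qed.

Lemma quot_coord_mxcomb r (F : 'I_r -> 'rV[K]_m) c : (forall j, (F j <= U)%MS) ->
  quot_coord (mxcomb F c) = \sum_j c j *: quot_coord (F j).
Proof.
move=> FU; have -> : \sum_j c j *: quot_coord (F j)
    = \row_i (\sum_j quot_coefs (F j) i * c j).
  by apply/rowP => i; rewrite !mxE summxE; apply: eq_bigr => j _; rewrite !mxE mulrC.
apply: quot_coord_eq; first exact: mxcomb_sub.
have -> : mxcomb E (fun i => \sum_j quot_coefs (F j) i * c j)
    = \sum_j mxcomb E (quot_coefs (F j)) *m M (c j).
  rewrite /mxcomb; under eq_bigr => i _ do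
    rewrite (big_morph M (mx_rmorphD hM) (mx_rmorph0 hM)) mulmx_sumr.
  rewrite exchange_big /=; apply: eq_bigr => j _; rewrite mulmx_suml.
  by apply: eq_bigr => i _; rewrite mx_rmorphM // mulmxA.
rewrite /mxcomb -sumrB; apply: summx_sub => j _; rewrite -mulmxBl.
exact: mxstable_row (quot_coefsP (FU j)) _.
Qed.

Definition subcoord W (w : {u : 'rV[K]_m | (u <= W)%MS}) := quot_coord (val w).

Lemma quot_coord_subcomb W r (t : 'I_r -> {u : 'rV[K]_m | (u <= W)%MS}) c :
  (W <= U)%MS ->
  quot_coord (mxcomb (fun j => val (t j)) c) = \row_j c j *m gmx (@subcoord W) t.
Proof.
move=> sWU; rewrite quot_coord_mxcomb => [|j]; last exact: submx_trans (valP (t j)) sWU.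
by rewrite mulmx_sum_row; apply: eq_bigr => j _; rewrite rowK mxE.
Qed.

Lemma quot_basis_of_free_coords W0 W q (A : 'M[K]_(q, d)) r
    (t : 'I_r -> {u : 'rV[K]_m | (u <= W)%MS}) :
  mxstable M W -> (W <= U)%MS ->
  (forall u, (u <= U)%MS -> (quot_coord u <= A)%MS = (u <= W0)%MS) ->
  free_mod (@subcoord W) A t -> (forall w, (@subcoord W w <= A + gmx (@subcoord W) t)%MS) ->
  quot_basis W0 W (fun j => val (t j)).
Proof.
move=> sW sWU coordA free span.
have tW j : (val (t j) <= W)%MS := valP (t j).
have combU c : (mxcomb (fun j => val (t j)) c <= U)%MS.
  exact: submx_trans (mxcomb_sub c sW tW) sWU.
split=> [//|c|w wW].
- rewrite -coordA // quot_coord_subcomb // => /free /rowP c0 j.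
  by have := c0 j; rewrite !mxE.
- have wU := submx_trans wW sWU.
  have /sub_addsmxP[y coord_w] := span (exist _ w wW).
  exists (fun j => y.2 0 j).
  rewrite -coordA ?addmx_sub ?eqmx_opp // quot_coordB // quot_coord_subcomb //.
  rewrite (_ : \row_j y.2 0 j = y.2); last by apply/rowP => j; rewrite mxE.
  by rewrite [quot_coord w]coord_w addrK submxMl.
Qed.

Lemma quot_dim_split W : mxstable M W -> (U' <= W)%MS -> (W <= U)%MS ->
  exists d1 d2, [/\ d = (d1 + d2)%N, quot_dim U' W d1 & quot_dim W U d2].
Proof.
move=> sW sU'W sWU.
have [r1 [t1 [free1 span1]]] := free_mod_spanning (@subcoord W) (0 : 'M[K]_d).
set G1 := gmx (@subcoord W) t1.
have [r2 [t2 [free2 span2]]] := free_mod_spanning (@subcoord U) G1.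
set G2 := gmx (@subcoord U) t2.
have B1 : quot_basis U' W (fun j => val (t1 j)).
  apply: quot_basis_of_free_coords free1 span1 => // u uU.
  by rewrite submx0 quot_coord_eq0.
have B2 : quot_basis W U (fun j => val (t2 j)).
  apply: quot_basis_of_free_coords free2 span2 => // u uU.
  apply/idP/idP => [/submxP[c coord_u] | uW]; last first.
    by have := span1 (exist _ u uW); rewrite adds0mx.
  pose v := mxcomb (fun j => val (t1 j)) (fun j => c 0 j).
  have vW : (v <= W)%MS := mxcomb_sub _ sW (fun j => valP (t1 j)).
  have vU := submx_trans vW sWU.
  rewrite -(subrK v u) addmx_sub // (submx_trans _ sU'W) // -quot_coord_eq0.
    rewrite quot_coordB // coord_u quot_coord_subcomb //.
    by rewrite (_ : \row_j c 0 j = c) ?subrr //; apply/rowP => j; rewrite mxE.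
  by rewrite addmx_sub ?eqmx_opp.
have full : (1%:M <= G1 + G2)%MS.
  case: EB => EU _ _; apply/row_subP => i.
  pose u := mxcomb E (fun j => row i 1%:M 0 j).
  have uU : (u <= U)%MS by apply: mxcomb_sub.
  have := span2 (exist _ u uU); rewrite /subcoord /= quot_coord_comb.
  by rewrite (_ : \row_j _ = row i 1%:M) //; apply/rowP => j; rewrite mxE.
exists r1, r2; split; [|by exists (fun j => val (t1 j))|by exists (fun j => val (t2 j))].
rewrite -(eqP (free_mod_row_free free1)) -(eqP (free_mod_row_free free2)).
rewrite -mxrank_disjoint_sum ?free_mod_capmx //.
by apply/eqP; rewrite eqn_leq rank_leq_col -{1}(mxrank1 K d) mxrankS.
Qed.

End Coordinates.
End QuotientDimension.

Section SimpleQuotient.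
Variables (K : fieldType) (m : nat) (M : K -> 'M[K]_m).
Hypothesis hM : mx_rmorph M.
Variables (U' U : 'M[K]_m).
Hypotheses (sU' : mxstable M U') (sU : mxstable M U) (sU'U : (U' <= U)%MS).
Hypothesis simU : simple_quot M U' U.
Variable v : 'rV[K]_m.
Hypotheses (vU : (v <= U)%MS) (vU' : ~~ (v <= U')%MS).

(* The vectors [u] of [U] with [u X] in [U'] form a stable subspace containing
   [U'] but not [v], hence equal to [U'] by simplicity. *)
Lemma simple_quot_orth_annihilate (z : 'rV[K]_m) X :
  (z <= orthmx U')%MS -> bistable M X -> (v *m X <= U')%MS ->
  (z *m X^T <= orthmx U)%MS.
Proof.
move=> zU' [XM sX _] vX.
pose S := (U :&: kermx (X *m cokermx U'))%MS.
have memS p (u : 'M[K]_(p, m)) : (u <= S)%MS = (u <= U)%MS && (u *m X <= U')%MS.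
  by rewrite sub_capmx sub_kermx [(_ *m X <= _)%MS]submxE mulmxA.
have sS : mxstable M S.
  move=> a; have /andP[SU SX] : (S <= U)%MS && (S *m X <= U')%MS by rewrite -memS.
  rewrite memS (submx_trans (submxMr _ SU) (sU a)) -mulmxA -XM mulmxA.
  exact: submx_trans (submxMr _ SX) (sU' a).
have sU'S : (U' <= S)%MS by rewrite memS sU'U sX.
case: (simU sS sU'S (capmxSl _ _)) => [SU'|].
  by move: vU'; rewrite (submx_trans _ SU') // memS vU vX.
rewrite memS submx_refl => /submxP[D UX].
rewrite sub_orthmx -mulmxA -trmx_mul UX trmx_mul mulmxA.
by move: zU'; rewrite sub_orthmx => /eqP->; rewrite mul0mx.
Qed.

Lemma simple_quot_cyclic u : (u <= U)%MS ->
  exists X, bistable M X /\ (u - v *m X <= U')%MS.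
Proof.
have [r [t [_ span]]] := free_mod_spanning (fun a => v *m M a) U'.
set G := gmx (fun a => v *m M a) t.
have sS : mxstable M (U' + G)%MS.
  move=> b; rewrite addsmxMr addsmx_sub (submx_trans (sU' b)) ?addsmxSl //=.
  by apply/row_subP => j; rewrite row_mul rowK -mulmxA -mx_rmorphM.
have SU : (U' + G <= U)%MS.
  rewrite addsmx_sub sU'U; apply/row_subP => j; rewrite rowK.
  exact: mxstable_row vU _.
have vS : (v <= U' + G)%MS by have := span 1; rewrite mx_rmorph1 // mulmx1.
case: (simU sS (addsmxSl _ _) SU) => [SU'|USG].
  by move: vU'; rewrite (submx_trans vS SU').
move=> /(submx_trans)/(_ USG)/sub_addsmxP[y ->].
exists (\sum_j y.2 0 j *: M (t j)); split.
  by apply: bistable_sum => j; apply/bistableZ/bistable_rep.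
have -> : y.2 *m G = v *m \sum_j y.2 0 j *: M (t j).
  by rewrite mulmx_sum_row mulmx_sumr; apply: eq_bigr => j _; rewrite rowK scalemxAr.
by rewrite addrK submxMl.
Qed.

End SimpleQuotient.

Section OrthTransfer.
Variables (K : fieldType) (m : nat) (M : K -> 'M[K]_m).
Hypothesis hM : mx_rmorph M.
Variables (U' U : 'M[K]_m) (v z : 'rV[K]_m).
Hypotheses (sU' : mxstable M U') (sU : mxstable M U).
Hypotheses (vU : (v <= U)%MS) (zU' : (z <= orthmx U')%MS).
Hypothesis v_gen : forall u, (u <= U)%MS ->
  exists X, bistable M X /\ (u - v *m X <= U')%MS.
Hypothesis z_gen : forall y, (y <= orthmx U')%MS ->
  exists X, bistable M X /\ (y - z *m X^T <= orthmx U)%MS.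
Hypothesis transfer : forall X, bistable M X ->
  (v *m X <= U')%MS = (z *m X^T <= orthmx U)%MS.

Lemma quot_dim_orth_transfer d :
  quot_dim M U' U d -> quot_dim (trmx_rep M) (orthmx U) (orthmx U') d.
Proof.
move=> [E [EU free span]].
have [X XE] := fin_all_exists (fun j => v_gen (EU j)).
pose Y c := \sum_j X j *m M (c j).
have bY c : bistable M (Y c).
  by apply: bistable_sum => j; apply: bistableM; [case: (XE j) | apply: bistable_rep].
have combF c : mxcomb (trmx_rep M) (fun j => z *m (X j)^T) c = z *m (Y c)^T.
  rewrite /mxcomb /Y linear_sum mulmx_sumr; apply: eq_bigr => j _.
  by rewrite /trmx_rep -mulmxA -trmx_mul; case: (XE j) => [[->]].
have combE c : (mxcomb M E c - v *m Y c <= U')%MS.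
  rewrite /mxcomb /Y mulmx_sumr -sumrB; apply: summx_sub => j _.
  by rewrite mulmxA -mulmxBl; apply: mxstable_row; case: (XE j).
exists (fun j => z *m (X j)^T); split=> [j|c|y yU'].
- have [[_ _ sXt] _] := XE j.
  exact: submx_trans (submxMr _ zU') (sXt _ (mxstable_orthmx sU')).
- rewrite combF -transfer // => vY; apply: free.
  by rewrite -[mxcomb M E c](subrK (v *m Y c)) addmx_sub.
- have [Z [bZ yZ]] := z_gen yU'.
  have vZU : (v *m Z <= U)%MS.
    by case: bZ => _ sZ _; apply: submx_trans (submxMr _ vU) (sZ _ sU).
  have [c vZc] := span _ vZU.
  exists c; rewrite combF.
  have : (v *m (Z - Y c) <= U')%MS.
    by rewrite mulmxBr -[v *m Z](subrK (mxcomb M E c)) -addrA addmx_sub.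
  rewrite transfer; last by apply: bistableD => //; apply: bistableN.
  rewrite raddfB /= mulmxBr => zZY.
  by rewrite -[y](subrK (z *m Z^T)) -addrA addmx_sub.
Qed.

End OrthTransfer.

Section OrthogonalDimension.
Variables (K : fieldType) (m : nat) (M : K -> 'M[K]_m).
Hypothesis hM : mx_rmorph M.
Implicit Types (U W : 'M[K]_m).

Lemma quot_dim_orth_simple U' U d :
  mxstable M U' -> mxstable M U -> (U' <= U)%MS -> ~~ (U <= U')%MS ->
  simple_quot M U' U -> quot_dim M U' U d ->
  quot_dim (trmx_rep M) (orthmx U) (orthmx U') d.
Proof.
move=> sU' sU sU'U nUU' simU.
have hMt := mx_rmorph_tr hM.
have sUo := mxstable_orthmx sU; have sU'o := mxstable_orthmx sU'.
have sUUo : (orthmx U <= orthmx U')%MS := orthmxS sU'U.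
have simUo := simple_quot_orthmx hM simU.
have /row_subPn[i vU'] := nUU'; set v := row i U in vU'.
have vU : (v <= U)%MS := row_sub i U.
have /row_subPn[i' zU] : ~~ (orthmx U' <= orthmx U)%MS.
  by apply: contra nUU'; apply: orthmxSr.
set z := row i' (orthmx U') in zU; have zU' : (z <= orthmx U')%MS := row_sub i' _.
have vUoo : (v <= orthmx (orthmx U))%MS by rewrite orthmxK.
apply: (quot_dim_orth_transfer hM sU' sU vU zU') => [u uU|y yU'|X bX].
- by have := simple_quot_cyclic hM sU' sU sU'U simU vU vU' uU.
- have [X [bX yX]] := simple_quot_cyclic hMt sUo sU'o sUUo simUo zU' zU yU'.
  exists X^T; rewrite trmxK; split=> //.
  by rewrite -[M]trmx_repK; apply: bistable_tr.
- apply/idP/idP; first exact: simple_quot_orth_annihilate.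
  move/(simple_quot_orth_annihilate sUo sU'o sUUo simUo zU' zU vUoo (bistable_tr bX)).
  by rewrite trmxK orthmxK.
Qed.

Lemma quot_dim_orth_trivial U' U d : (U <= U')%MS -> quot_dim M U' U d ->
  quot_dim (trmx_rep M) (orthmx U) (orthmx U') d.
Proof.
case: d => [|d] sUU' [E [EU free _]].
  exists (fun _ => 0); split=> [[] //|c _ [] //|y yU'].
  by exists (fun _ => 0); rewrite /mxcomb big_ord0 subr0 (submx_trans yU') ?orthmxS.
have : (mxcomb M E (fun _ => 1) <= U')%MS.
  by apply: summx_sub => i _; rewrite mx_rmorph1 // mulmx1 (submx_trans (EU i)).
by move/free/(_ ord0)/eqP; rewrite oner_eq0.
Qed.

Lemma quot_dim_orth U' U d : mxstable M U' -> mxstable M U -> (U' <= U)%MS ->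
  quot_dim M U' U d -> quot_dim (trmx_rep M) (orthmx U) (orthmx U') d.
Proof.
have [n] := ubnP (\rank U - \rank U')%N.
elim: n => // n IH in U' U d * => rkn sU' sU sU'U dimU.
have [sUU'|nUU'] := boolP (U <= U')%MS; first exact: quot_dim_orth_trivial.
case: (classic (exists W, [/\ mxstable M W, (U' <= W)%MS, (W <= U)%MS,
    ~~ (W <= U')%MS & ~~ (U <= W)%MS])) => [[W [sW sU'W sWU nWU' nUW]]|noW].
  have rkU'W : (\rank U' < \rank W)%N by apply: rank_ltmx; rewrite ltmxE sU'W.
  have rkWU : (\rank W < \rank U)%N by apply: rank_ltmx; rewrite ltmxE sWU.
  case: dimU => E EB.
  have [d1 [d2 [-> dimW dimU]]] := quot_dim_split hM sU' sU EB sW sU'W sWU.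
  rewrite addnC; apply: (quot_dim_glue (mx_rmorph_tr hM) (mxstable_orthmx sW)
    (orthmxS sWU) (orthmxS sU'W)).
  - by apply: IH dimU => //; lia.
  - by apply: IH dimW => //; lia.
apply: quot_dim_orth_simple => // W sW sU'W sWU.
have [|nWU'] := boolP (W <= U')%MS; first by left.
have [|nUW] := boolP (U <= W)%MS; first by right.
by case: noW; exists W.
Qed.

Lemma quot_dim_trmx_rep d : quot_dim M 0 1%:M d -> quot_dim (trmx_rep M) 0 1%:M d.
Proof.
move=> dimM; have s0 : mxstable M 0 by move=> a; rewrite mul0mx.
have := quot_dim_orth s0 (fun a => submx1 _) (sub0mx _ _) dimM.
by rewrite orthmx1; apply: eqmx_quot_dim; last exact: orthmx0.
Qed.

End OrthogonalDimension.

(** * Two-sided vector spaces and their duals *)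

Section TwoSidedSpace.
Variables (K : fieldType) (k : {pred K}) (V : tsv K k).

Lemma vadd_assoc : associative (@vadd K k V). Proof. exact: vaddA. Qed.
Lemma vadd_comm : commutative (@vadd K k V). Proof. exact: vaddC. Qed.
Lemma vadd_left_id : left_id (vzero V) (@vadd K k V). Proof. exact: vadd0. Qed.
HB.instance Definition _ :=
  Monoid.isComLaw.Build V (vzero V) (@vadd K k V) vadd_assoc vadd_comm vadd_left_id.

Lemma vaddx0 (x : V) : vadd x (vzero V) = x.
Proof. by rewrite vaddC vadd0. Qed.

Lemma vadd_idl (x y : V) : vadd x y = y -> x = vzero V.
Proof.
move=> /(congr1 (fun w => vadd w (vopp y))).
by rewrite -vaddA (vaddC y) vaddN vaddx0.
Qed.

Lemma lact0 (x : V) : lact 0 x = vzero V.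
Proof. by apply: (@vadd_idl _ (lact 0 x)); rewrite -lactDl addr0. Qed.

Lemma lactx0 a : lact a (vzero V) = vzero V.
Proof. by apply: (@vadd_idl _ (lact a (vzero V))); rewrite -lactDr vadd0. Qed.

Lemma ractx0 a : ract (vzero V) a = vzero V.
Proof. by apply: (@vadd_idl _ (ract (vzero V) a)); rewrite -ractDl vadd0. Qed.

Lemma lact_vsum a r (F : 'I_r -> V) : lact a (vsum F) = vsum (fun i => lact a (F i)).
Proof. by rewrite /vsum (big_morph (lact a) (lactDr a) (lactx0 a)). Qed.

Lemma ract_vsum b r (F : 'I_r -> V) : ract (vsum F) b = vsum (fun i => ract (F i) b).
Proof.
by rewrite /vsum (big_morph (fun x : V => ract x b) (fun x y => ractDl b x y) (ractx0 b)).
Qed.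

(* Lets the right dual be handled as a left dual ([rlin_llin_op]). *)
Definition tsv_op : tsv K k.
Proof.
refine (@TSV K k V (vzero V) (@vadd _ _ V) (@vopp _ _ V)
  (fun a x => ract x a) (fun x b => lact b x) (@vaddA _ _ V) (@vaddC _ _ V)
  (@vadd0 _ _ V) (@vaddN _ _ V) (@ract1 _ _ V) _ (fun a => @ractDl _ _ V a)
  (@ractDr _ _ V) (@lact1 _ _ V) _ (@lactDr _ _ V) (fun a b x => @lactDl _ _ V a b x)
  (fun a b x => esym (lract b a x)) (fun c x kc => esym (central x kc))).
- by move=> a b x; rewrite mulrC ractM.
- by move=> a b x; rewrite mulrC lactM.
Defined.

End TwoSidedSpace.

Section LeftCoordinates.
Variables (K : fieldType) (k : {pred K}) (V : tsv K k) (n : nat) (e : 'I_n -> V).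
Hypothesis e_free :
  forall c, vsum (fun i => lact (c i) (e i)) = vzero V -> forall i, c i = 0.
Hypothesis e_span : forall x, exists c, x = vsum (fun i => lact (c i) (e i)).

Definition lcomb (c : 'rV[K]_n) : V := vsum (fun i => lact (c 0 i) (e i)).

Lemma lcombD c c' : vadd (lcomb c) (lcomb c') = lcomb (c + c').
Proof.
by rewrite /lcomb /vsum -big_split; apply: eq_bigr => i _; rewrite mxE lactDl.
Qed.

Lemma lcombZ a c : lact a (lcomb c) = lcomb (a *: c).
Proof. by rewrite lact_vsum; apply: eq_bigr => i _; rewrite mxE lactM. Qed.

Lemma lcomb_inj : injective lcomb.
Proof.
move=> c c' eq_c; have d0 : lcomb (c - c') = vzero V.
  by apply: (@vadd_idl _ _ _ _ (lcomb c')); rewrite lcombD subrK.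
apply/rowP => i; apply/eqP; rewrite -subr_eq0.
by have := e_free (c := fun i => (c - c') 0 i) d0 i; rewrite !mxE => ->.
Qed.

Lemma lcomb_surj x : exists c, x = lcomb c.
Proof.
have [c ->] := e_span x; exists (\row_i c i).
by congr vsum; apply: functional_extensionality => i; rewrite mxE.
Qed.

Definition lcoord (x : V) : 'rV[K]_n :=
  proj1_sig (constructive_indefinite_description _ (lcomb_surj x)).

Lemma lcoordK : cancel lcoord lcomb.
Proof.
by move=> x; rewrite /lcoord; case: constructive_indefinite_description.
Qed.

Lemma lcombK : cancel lcomb lcoord.
Proof. by move=> c; apply: lcomb_inj; rewrite lcoordK. Qed.

Lemma lcoordD x y : lcoord (vadd x y) = lcoord x + lcoord y.
Proof. by apply: lcomb_inj; rewrite -lcombD !lcoordK. Qed.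

Lemma lcoord0 : lcoord (vzero V) = 0.
Proof.
apply: lcomb_inj; rewrite lcoordK /lcomb /vsum big1 // => i _.
by rewrite mxE lact0.
Qed.

Lemma lcoordZ a x : lcoord (lact a x) = a *: lcoord x.
Proof. by apply: lcomb_inj; rewrite -lcombZ !lcoordK. Qed.

Lemma lcoord_vsum r (F : 'I_r -> V) : lcoord (vsum F) = \sum_i lcoord (F i).
Proof. by rewrite /vsum (big_morph lcoord lcoordD lcoord0). Qed.

Lemma lcoord_basis j : lcoord (e j) = row j 1%:M.
Proof.
apply: lcomb_inj; rewrite lcoordK /lcomb /vsum (bigD1 j) //= big1 => [|i ij].
  by rewrite !mxE eqxx lact1 vaddx0.
by rewrite !mxE eq_sym (negbTE ij) lact0.
Qed.

Definition ract_mx b : 'M[K]_n := \matrix_i lcoord (ract (e i) b).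

Lemma lcoord_ract x b : lcoord (ract x b) = lcoord x *m ract_mx b.
Proof.
rewrite -{1}(lcoordK x) /lcomb ract_vsum lcoord_vsum mulmx_sum_row.
by apply: eq_bigr => i _; rewrite -lract lcoordZ rowK.
Qed.

Lemma mx_rmorph_ract_mx : mx_rmorph ract_mx.
Proof.
split=> [a b|a b|]; apply/row_matrixP => i.
- by rewrite linearD /= !rowK ractDr lcoordD.
- by rewrite row_mul !rowK -lcoord_ract ractM.
- by rewrite rowK ract1 lcoord_basis.
Qed.

Definition lfun (z : 'rV[K]_n) (x : V) : K := (lcoord x *m z^T) 0 0.

Lemma llin_lfun z : llin (lfun z).
Proof.
split=> [x y|a x]; rewrite /lfun; first by rewrite lcoordD mulmxDl mxE.
by rewrite lcoordZ -scalemxAl mxE.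
Qed.

Lemma lfun_ract z b x : lfun z (ract x b) = lfun (z *m (ract_mx b)^T) x.
Proof. by rewrite /lfun lcoord_ract trmx_mul trmxK mulmxA. Qed.

Lemma lfun_sum r (Z : 'I_r -> 'rV[K]_n) x : \sum_i lfun (Z i) x = lfun (\sum_i Z i) x.
Proof. by rewrite /lfun linear_sum mulmx_sumr summxE. Qed.

Lemma lfunZ c z x : c * lfun z x = lfun (c *: z) x.
Proof. by rewrite /lfun linearZ /= -scalemxAr [RHS]mxE. Qed.

Lemma lfun_basis z j : lfun z (e j) = z 0 j.
Proof. by rewrite /lfun lcoord_basis -row_mul mul1mx !mxE. Qed.

Lemma lfun_inj z : (forall x, lfun z x = 0) -> z = 0.
Proof. by move=> z0; apply/rowP => j; rewrite -lfun_basis z0 mxE. Qed.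

Lemma llin_lfunE f : llin f -> f =1 lfun (\row_j f (e j)).
Proof.
move=> [fD fZ] x; have f0 : f (vzero V) = 0.
  by apply: (addrI (f (vzero V))); rewrite -fD vadd0 addr0.
rewrite -{1}(lcoordK x) /lcomb /vsum (big_morph f fD f0) /lfun mxE.
by apply: eq_bigr => i _; rewrite fZ !mxE.
Qed.

Lemma llin_pointwise_basis : exists G : 'I_n -> V -> K, [/\ forall i, llin (G i),
    forall c, (forall x, \sum_i c i * G i x = 0) -> forall i, c i = 0
  & forall f, llin f -> exists c, forall x, f x = \sum_i c i * G i x].
Proof.
have lfun_comb c x : \sum_i c i * lfun (row i 1%:M) x = lfun (\row_i c i) x.
  rewrite -[\row_i c i]mulmx1 mulmx_sum_row -lfun_sum.
  by apply: eq_bigr => i _; rewrite lfunZ mxE.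
exists (fun i => lfun (row i 1%:M)); split=> [i|c c0|f lf].
- exact: llin_lfun.
- have /rowP cz : \row_i c i = 0 by apply: lfun_inj => x; rewrite -lfun_comb c0.
  by move=> i; have := cz i; rewrite !mxE.
- by exists (fun j => f (e j)) => x; rewrite lfun_comb (llin_lfunE lf).
Qed.

Variable er : 'I_n -> V.
Hypothesis er_free :
  forall c, vsum (fun i => ract (er i) (c i)) = vzero V -> forall i, c i = 0.
Hypothesis er_span : forall x, exists c, x = vsum (fun i => ract (er i) (c i)).

(* The right basis shows that [K^n] has dimension [n] for the action [ract_mx];
   the transposed action, which is precomposition on functionals, then also
   has dimension [n]. *)
Lemma llin_precomp_basis : exists F : 'I_n -> V -> K, [/\ forall i, llin (F i),
    forall c, (forall x, \sum_i F i (ract x (c i)) = 0) -> forall i, c i = 0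
  & forall f, llin f -> exists c, forall x, f x = \sum_i F i (ract x (c i))].
Proof.
have comb_er c : mxcomb ract_mx (fun i => lcoord (er i)) c
    = lcoord (vsum (fun i => ract (er i) (c i))).
  by rewrite lcoord_vsum; apply: eq_bigr => i _; rewrite lcoord_ract.
have dimR : quot_dim ract_mx 0 1%:M n.
  exists (fun i => lcoord (er i)); split=> [i|c|u _]; first exact: submx1.
    by rewrite submx0 comb_er -lcoord0 => /eqP/(can_inj lcoordK); apply: er_free.
  have [c uc] := er_span (lcomb u).
  by exists c; rewrite comb_er -uc lcombK subrr sub0mx.
have [R [_ R_free R_span]] := quot_dim_trmx_rep mx_rmorph_ract_mx dimR.
have comb_R c x :
    \sum_i lfun (R i) (ract x (c i)) = lfun (mxcomb (trmx_rep ract_mx) R c) x.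
  by rewrite /mxcomb -lfun_sum; apply: eq_bigr => i _; rewrite lfun_ract.
exists (fun i => lfun (R i)); split=> [i|c c0|f lf].
- exact: llin_lfun.
- apply: R_free; suff -> : mxcomb (trmx_rep ract_mx) R c = 0 by rewrite sub0mx.
  by apply: lfun_inj => x; rewrite -comb_R c0.
- have [c Rc] := R_span (\row_j f (e j)) (submx1 _).
  exists c => x; rewrite comb_R (llin_lfunE lf); congr lfun.
  by move: Rc; rewrite submx0 subr_eq0 => /eqP.
Qed.

End LeftCoordinates.

Section DualRank.
Variables (K : fieldType) (k : {pred K}) (V : tsv K k) (n : nat).

Lemma ldual_vsum r (F : 'I_r -> ldual V) x :
  sval (vsum F : ld_car V) x = \sum_i sval (F i : ld_car V) x.
Proof.
by rewrite /vsum (big_morph (fun f : ldual V => sval (f : ld_car V) x)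
  (id1 := 0) (op1 := +%R)).
Qed.

Lemma rdual_vsum r (F : 'I_r -> rdual V) x :
  sval (vsum F : rd_car V) x = \sum_i sval (F i : rd_car V) x.
Proof.
by rewrite /vsum (big_morph (fun f : rdual V => sval (f : rd_car V) x)
  (id1 := 0) (op1 := +%R)).
Qed.

Lemma rlin_llin_op (f : V -> K) : rlin f <-> @llin _ _ (tsv_op V) f.
Proof.
split=> [] [fD fZ]; split=> //.
  by move=> a x /=; rewrite fZ mulrC.
by move=> x b; rewrite mulrC; apply: fZ.
Qed.

Lemma ldual_rank : has_rank V n -> has_rank (ldual V) n.
Proof.
move=> [[el [el_free el_span]] [er [er_free er_span]]]; split.
- have [F [F_llin F_free F_span]] := llin_precomp_basis el_free el_span er_free er_span.
  exists (fun i => exist _ (F i) (F_llin i) : ldual V); split=> [c c0|phi].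
    apply: F_free => x.
    by have := congr1 (fun f : ldual V => sval (f : ld_car V) x) c0; rewrite ldual_vsum.
  have [c Fc] := F_span _ (svalP phi).
  by exists c; apply: sig_fun_eq => x; rewrite ldual_vsum Fc.
- have [G [G_llin G_free G_span]] := llin_pointwise_basis el_free el_span.
  exists (fun i => exist _ (G i) (G_llin i) : ldual V); split=> [c c0|phi].
    apply: G_free => x.
    by have := congr1 (fun f : ldual V => sval (f : ld_car V) x) c0; rewrite ldual_vsum.
  have [c Gc] := G_span _ (svalP phi).
  by exists c; apply: sig_fun_eq => x; rewrite ldual_vsum Gc.
Qed.

Lemma rdual_rank : has_rank V n -> has_rank (rdual V) n.
Proof.
move=> [[el [el_free el_span]] [er [er_free er_span]]]; split.
- have [G [G_llin G_free G_span]] :=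
    @llin_pointwise_basis _ _ (tsv_op V) _ _ er_free er_span.
  exists (fun i => exist _ (G i) (proj2 (rlin_llin_op _) (G_llin i)) : rdual V).
  split=> [c c0|psi].
    apply: G_free => x.
    by have := congr1 (fun f : rdual V => sval (f : rd_car V) x) c0; rewrite rdual_vsum.
  have [c Gc] := G_span _ (proj1 (rlin_llin_op _) (svalP psi)).
  by exists c; apply: sig_fun_eq => x; rewrite rdual_vsum Gc.
- have [F [F_llin F_free F_span]] :=
    @llin_precomp_basis _ _ (tsv_op V) _ _ er_free er_span _ el_free el_span.
  exists (fun i => exist _ (F i) (proj2 (rlin_llin_op _) (F_llin i)) : rdual V).
  split=> [c c0|psi].
    apply: F_free => x.
    by have := congr1 (fun f : rdual V => sval (f : rd_car V) x) c0; rewrite rdual_vsum.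
  have [c Fc] := F_span _ (proj1 (rlin_llin_op _) (svalP psi)).
  by exists c; apply: sig_fun_eq => x; rewrite rdual_vsum Fc.
Qed.

End DualRank.

Theorem corollary4p4 (K : fieldType) (k : divringClosed K) (V : tsv K k) (n : nat) :
  perfect_field K -> has_rank V n -> nc_sym_exists V n.
Proof.
move=> _ rkV [i|i] /=.
  by elim: i => //= i IH; apply: rdual_rank.
by elim: i => /= [|i IH]; apply: ldual_rank.
Qed.
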